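(* Let $R$ be a Noetherian ring and let $\mathcal P_0:=\{I\in\mathcal I^\bullet(R)\mid \dim(R/I)=0\}$. Then: (1) $\mathcal P_0$ is dense in $\mathcal I^\bullet(R)$ with respect to the constructible topology; (2) if all residue fields of $R$ are finite, then $\mathcal P_0$ is the smallest dense subset of $\mathcal I^\bullet(R)$ with respect to the constructible topology.
   Context: $\mathcal I(R)$ is the set of ideals of $R$ and $\mathcal I^\bullet(R)$ the set of proper ideals. $\mathcal I(R)$ carries the Zariski topology with basis of open sets $\mathcal B(x_1,\ldots,x_n):=\{I\in\mathcal I(R)\mid x_1,\ldots,x_n\in I\}$; it is a spectral space. The constructible topology is the coarsest topology in which all open quasi-compact subsets of $\mathcal I(R)$ are clopen; $\mathcal I^\bullet(R)$ carries the subspace topology of the constructible topology. *)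

From HB Require Import structures.
From mathcomp Require Import all_boot all_algebra.
From mathcomp Require Import boolp classical_sets.
From Stdlib Require List.
Import GRing.Theory.

Set Implicit Arguments.
Unset Strict Implicit.
Unset Printing Implicit Defensive.

Local Open Scope ring_scope.
Local Open Scope classical_set_scope.

Section IdealSpace.
Variable R : comPzRingType.

Definition is_ideal (I : set R) : Prop :=
  [/\ I 0, (forall x y, I x -> I y -> I (x + y)) & (forall r x, I x -> I (r * x))].

Definition ideals : set (set R) := [set I | is_ideal I].
Definition proper_ideals : set (set R) := [set I | is_ideal I /\ ~ I 1].

Definition is_prime (P : set R) : Prop :=
  [/\ is_ideal P, ~ P 1 & (forall x y, P (x * y) -> P x \/ P y)].

Definition is_maximal (M : set R) : Prop :=
  [/\ is_ideal M, ~ M 1 &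
      (forall J, is_ideal J -> M `<=` J -> ~ J 1 -> J = M)].

Definition noetherian : Prop :=
  forall f : nat -> set R, (forall n, is_ideal (f n)) ->
    (forall n, f n `<=` f n.+1) ->
    exists N, forall n, (N <= n)%N -> f n = f N.

(** A chain P_0 ⊊ P_1 ⊊ ... ⊊ P_n of primes of R containing I
    (= a chain of primes of length n in R/I, by the correspondence theorem). *)
Definition prime_chain_above (I : set R) (n : nat) (c : nat -> set R) : Prop :=
  [/\ forall i, (i <= n)%N -> is_prime (c i),
      I `<=` c 0%N &
      forall i, (i < n)%N -> c i `<=` c i.+1 /\ c i <> c i.+1].

(** dim(R/I) = 0: the supremum of lengths of prime chains of R/I is 0. *)
Definition dim_quot_eq0 (I : set R) : Prop :=
  (exists c, prime_chain_above I 0 c) /\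
  (forall n c, prime_chain_above I n c -> n = 0%N).

Definition P0 : set (set R) := [set I | proper_ideals I /\ dim_quot_eq0 I].

(** R/M is finite (M maximal: this is the residue field at M). *)
Definition finite_quotient (M : set R) : Prop :=
  exists s : seq R, forall x, exists2 y, y \in s & M (x - y).

Definition residue_fields_finite : Prop :=
  forall M, is_maximal M -> finite_quotient M.

(** Zariski topology on I(R): basis B(x_1,...,x_n). *)
Definition zbasic (xs : seq R) : set (set R) :=
  [set I | ideals I /\ forall x, x \in xs -> I x].

Definition zopen (U : set (set R)) : Prop :=
  U `<=` ideals /\
  forall I, U I -> exists xs, zbasic xs I /\ zbasic xs `<=` U.

Definition zquasi_compact (U : set (set R)) : Prop :=
  U `<=` ideals /\
  forall C : set (set (set R)), (forall V, C V -> zopen V) ->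
    U `<=` \bigcup_(V in C) V ->
    exists s : seq (set (set R)),
      (forall V, List.In V s -> C V) /\
      U `<=` [set I | exists2 V, List.In V s & V I].

Definition cons_subbasic (V : set (set R)) : Prop :=
  exists U, [/\ zopen U, zquasi_compact U & (V = U \/ V = ideals `\` U)].

(** Open sets of the topology on I(R) generated by that subbasis, i.e. the
    coarsest topology in which all open quasi-compact sets are clopen. *)
Definition cons_open (O : set (set R)) : Prop :=
  O `<=` ideals /\
  forall I, O I -> exists s : seq (set (set R)),
    [/\ (forall V, List.In V s -> cons_subbasic V),
        (forall V, List.In V s -> V I) &
        ideals `&` [set J | forall V, List.In V s -> V J] `<=` O].

Definition cons_dense_in (Y D : set (set R)) : Prop :=
  D `<=` Y /\
  forall O, cons_open O -> O `&` Y !=set0 -> O `&` D !=set0.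

End IdealSpace.

Arguments ideals R : clear implicits.
Arguments proper_ideals R : clear implicits.
Arguments P0 R : clear implicits.
Arguments noetherian R : clear implicits.
Arguments residue_fields_finite R : clear implicits.

(* Both parts rest on the existence of maximal members in nonempty families of ideals.
   (1) A constructible neighbourhood of a proper ideal I contains every ideal K >= I that
   avoids a suitable finite set xs of elements outside I, since a quasi-compact Zariski open
   set is a finite union of basic sets B(zs). Take J maximal among the ideals containing I and
   avoiding 1 :: xs; then J + Ra meets 1 :: xs for every a outside J. For x in xs minimal
   with respect to inclusion of the ideals J + Rx, the ideal quotient (J : x) is maximal, and
   every prime above J contains such an (J : x), because the chain (J : s^n) stabilises.
   Hence every prime above J is maximal, so dim R/J = 0.
   (2) If dim R/I = 0 and the residue fields are finite, R/I is finite: an ideal J >= I that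
   is maximal with R/J infinite would be prime, hence maximal, or R/J would be an extension
   of the finite rings R/(J : a) and R/(J + Ra). With I = (g_1, ..., g_k) and a finite set of
   representatives of R/I, the point {I} is then constructibly open, so it meets every dense
   set. *)

From mathcomp Require Import all_boot all_algebra.
From mathcomp Require Import boolp classical_sets.
From Stdlib Require List.

Set Implicit Arguments.
Unset Strict Implicit.
Unset Printing Implicit Defensive.
Import GRing.Theory.
Local Open Scope ring_scope.
Local Open Scope classical_set_scope.

Lemma In_mem (T : eqType) (x : T) (s : seq T) : x \in s -> List.In x s.
Proof. by elim: s => //= y s IH; rewrite in_cons => /orP [/eqP ->|/IH]; [left|right]. Qed.

Lemma count_ltn (T : eqType) (p q : pred T) (s : seq T) :
  (forall z, p z -> q z) -> (exists2 z, z \in s & q z && ~~ p z) ->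
  (count p s < count q s)%N.
Proof.
move=> pq; elim: s => [|z s IH] [w] //.
have le_pq : (p z <= q z)%N by case pz: (p z) => //; rewrite (pq z pz).
rewrite in_cons => /orP [/eqP -> | ws] /andP [qw npw] /=.
  by rewrite (negbTE npw) qw add0n add1n ltnS; apply: sub_count.
by rewrite -addnS; apply: leq_add => //; apply: IH; exists w => //; rewrite qw.
Qed.

Lemma exists_minimal_below (T : eqType) (le : T -> T -> Prop) (s : seq T) :
  (forall x, le x x) -> (forall x y z, le x y -> le y z -> le x z) ->
  forall a, a \in s ->
  exists m, [/\ m \in s, le m a & forall y, y \in s -> le y m -> le m y].
Proof.
move=> le_refl le_trans.
pose c x := count (fun z => `[< le z x >]) s.
suff: forall n a, (c a < n)%N -> a \in s ->
    exists m, [/\ m \in s, le m a & forall y, y \in s -> le y m -> le m y].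
  by move=> H a; apply: H (ltnSn _).
elim=> // n IH a ca ain.
have [amin|] := EM (forall y, y \in s -> le y a -> le a y); first by exists a.
move=> /existsNP [y /not_implyP [yin /not_implyP [lya nlay]]].
have cya : (c y < c a)%N.
  apply: count_ltn => [z /asboolP lzy|]; first by apply/asboolP; apply: le_trans lya.
  by exists a => //; apply/andP; split; [apply/asboolP | apply/asboolPn].
have [m [mxs lmy mmin]] := IH y (leq_trans cya ca) yin.
by exists m; split => //; apply: le_trans lya.
Qed.

Section Ideals.
Variable R : comPzRingType.
Implicit Types (I J K L M P : set R) (a r s x y : R) (xs ys zs : seq R).

Lemma ideal0 I : is_ideal I -> I 0. Proof. by case. Qed.

Lemma idealD I x y : is_ideal I -> I x -> I y -> I (x + y).
Proof. by case=> _ + _; apply. Qed.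

Lemma idealMl I r x : is_ideal I -> I x -> I (r * x).
Proof. by case=> _ _; apply. Qed.

Lemma idealMr I r x : is_ideal I -> I x -> I (x * r).
Proof. by rewrite mulrC; apply: idealMl. Qed.

Lemma idealB I x y : is_ideal I -> I x -> I y -> I (x - y).
Proof. by move=> HI Ix Iy; rewrite -mulN1r; apply: idealD => //; apply: idealMl. Qed.

Definition span xs : set R :=
  [set z | forall L, is_ideal L -> (forall y, y \in xs -> L y) -> L z].

Definition colon J a : set R := [set r | J (r * a)].

Definition adjoin J a : set R := [set z | exists j r, J j /\ z = j + r * a].

Lemma span_ideal xs : is_ideal (span xs).
Proof.
split=> [L HL _|x y Sx Sy L HL Lxs|r x Sx L HL Lxs]; first exact: ideal0.
  by apply: idealD => //; [apply: Sx | apply: Sy].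
by apply: idealMl => //; apply: Sx.
Qed.

Lemma mem_span xs y : y \in xs -> span xs y.
Proof. by move=> yxs L _; apply. Qed.

Lemma span_sub xs L : is_ideal L -> (forall y, y \in xs -> L y) -> span xs `<=` L.
Proof. by move=> HL Lxs z; apply. Qed.

Lemma colon_ideal J a : is_ideal J -> is_ideal (colon J a).
Proof.
move=> HJ; split; rewrite /colon /=.
- by rewrite mul0r; apply: ideal0.
- by move=> x y Jx Jy; rewrite mulrDl; apply: idealD.
- by move=> r x Jx; rewrite -mulrA; apply: idealMl.
Qed.

Lemma sub_colon J a : is_ideal J -> J `<=` colon J a.
Proof. by move=> HJ x Jx; apply: idealMr. Qed.

Lemma adjoin_ideal J a : is_ideal J -> is_ideal (adjoin J a).
Proof.
move=> HJ; split; rewrite /adjoin /=.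
- by exists 0, 0; rewrite mul0r addr0; split => //; apply: ideal0.
- move=> _ _ [j [r [Jj ->]]] [j' [r' [Jj' ->]]].
  by exists (j + j'), (r + r'); rewrite mulrDl addrACA; split => //; apply: idealD.
- move=> s _ [j [r [Jj ->]]].
  by exists (s * j), (s * r); rewrite mulrDr mulrA; split => //; apply: idealMl.
Qed.

Lemma sub_adjoin J a : is_ideal J -> J `<=` adjoin J a.
Proof. by move=> HJ x Jx; exists x, 0; rewrite mul0r addr0. Qed.

Lemma adjoin_self J a : is_ideal J -> adjoin J a a.
Proof. by move=> HJ; exists 0, 1; rewrite mul1r add0r; split => //; apply: ideal0. Qed.

Lemma adjoin_trans J x y z : is_ideal J ->
  adjoin J y x -> adjoin J z y -> adjoin J z x.
Proof.
move=> HJ [j [r [Jj ->]]] [j' [r' [Jj' ->]]].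
exists (j + r * j'), (r * r'); rewrite mulrDr addrA mulrA.
by split => //; apply: idealD => //; apply: idealMl.
Qed.

Lemma maximal_sub_eq M L : is_maximal M -> is_ideal L -> ~ L 1 -> M `<=` L -> L = M.
Proof. by case=> _ _ + HL L1 ML; apply. Qed.

Lemma maximal_prime M : is_maximal M -> is_prime M.
Proof.
move=> Mmax; have [HM M1 _] := Mmax; split => // x y Mxy.
have [Mx|Mx] := EM (M x); [by left | right].
have [j [r [Mj E1]]] : adjoin M x 1.
  apply: contrapT => M1x; apply: Mx.
  rewrite -(maximal_sub_eq Mmax (adjoin_ideal x HM) M1x (sub_adjoin x HM)).
  exact: adjoin_self.
have -> : y = j * y + r * (x * y) by rewrite mulrA -mulrDl -E1 mul1r.
by apply: idealD => //; [apply: idealMr | apply: idealMl].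
Qed.

Lemma prime_expn P s n : is_prime P -> ~ P s -> ~ P (s ^+ n).
Proof.
move=> [_ P1 Pmul] Ps; elim: n => [|n IH]; first by rewrite expr0.
by rewrite exprS => /Pmul [].
Qed.

Lemma prime_sup_bigcap P (A : R -> set R) xs : is_prime P ->
  (forall x, x \in xs -> is_ideal (A x)) ->
  [set r | forall x, x \in xs -> A x r] `<=` P ->
  exists2 x, x \in xs & A x `<=` P.
Proof.
move=> [_ P1 Pmul]; elim: xs => [|z xs IH] Aid capP.
  by exfalso; apply: P1; apply: capP.
have [AzP|] := EM (A z `<=` P); first by exists z => //; rewrite mem_head.
move=> /existsNP [a /not_implyP [Aza Pa]].
have [x xxs AxP] : exists2 x, x \in xs & A x `<=` P.
  apply: IH => [x xxs|b Ab]; first by apply: Aid; rewrite in_cons xxs orbT.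
  have /Pmul [//|//] : P (a * b).
  apply: capP => x; rewrite in_cons => /orP [/eqP ->|xxs].
    by apply: idealMr => //; apply: Aid; rewrite mem_head.
  by apply: idealMl; [apply: Aid; rewrite in_cons xxs orbT | apply: Ab].
by exists x => //; rewrite in_cons xxs orbT.
Qed.

Lemma not_prime_zero_divisors J : is_ideal J -> ~ J 1 -> ~ is_prime J ->
  exists a b, [/\ J (a * b), ~ J a & ~ J b].
Proof.
move=> HJ J1 Jnp; apply: contrapT => no_ab; apply: Jnp; split => // x y Jxy.
have [Jx|Jx] := EM (J x); [by left | right].
by apply: contrapT => Jy; apply: no_ab; exists x, y.
Qed.

Lemma dim_quot_eq0_of_maximal_primes I :
  (exists P, is_prime P /\ I `<=` P) ->
  (forall P, is_prime P -> I `<=` P -> is_maximal P) -> dim_quot_eq0 I.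
Proof.
move=> [P [HP IP]] prime_max; split; first by exists (fun=> P); split.
move=> [//|n] c [c_prime Ic0 c_chain].
have [c01 c01_neq] := c_chain 0%N isT.
have [Hc1 c1_1 _] := c_prime 1%N isT.
exfalso; apply: c01_neq; apply/esym/maximal_sub_eq => //.
exact: prime_max (c_prime 0%N isT) Ic0.
Qed.

Lemma finite_quotient_sub J K : J `<=` K -> finite_quotient J -> finite_quotient K.
Proof. by move=> JK [s Js]; exists s => x; have [y ys /JK] := Js x; exists y. Qed.

(* R/J is an extension of R/(J + Ra) by R/(J : a), embedded via r |-> r a. *)
Lemma finite_quotient_colon_adjoin J a : is_ideal J ->
  finite_quotient (adjoin J a) -> finite_quotient (colon J a) -> finite_quotient J.
Proof.
move=> HJ [s2 s2P] [s1 s1P].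
exists [seq y2 + y1 * a | y2 <- s2, y1 <- s1] => x.
have [y2 y2s [j [r [Jj Ex]]]] := s2P x.
have [y1 y1s Jry1] := s1P r.
exists (y2 + y1 * a); first exact: allpairs_f.
have -> : x - (y2 + y1 * a) = j + (r - y1) * a by rewrite opprD addrA Ex mulrBl addrA.
exact: idealD.
Qed.

Lemma zopen_up U I K : zopen U -> U I -> is_ideal K -> I `<=` K -> U K.
Proof.
move=> [_ Uopen] UI HK IK; have [xs [[_ Ixs] xsU]] := Uopen _ UI.
by apply: xsU; split => // x /Ixs /IK.
Qed.

Lemma zbasic_open zs : zopen (zbasic zs).
Proof. by split=> [K []|K Kzs] //; exists zs; split. Qed.

Lemma zbasic_quasi_compact zs : zquasi_compact (zbasic zs).
Proof.
split=> [K [] //|C C_open cover].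
have [W CW Wspan] := cover _ (conj (span_ideal zs) (@mem_span zs)).
have [ws [[_ Wws] wsW]] := (C_open _ CW).2 _ Wspan.
exists [:: W]; split=> [V [<-|[]] //|K [HK Kzs]].
by exists W; [left | apply: wsW; split => // w /Wws; apply: span_sub].
Qed.

Lemma zbasics_avoid I (l : seq (set (set R))) : is_ideal I ->
  (forall W, List.In W l -> exists zs, W `<=` zbasic zs /\ ~ zbasic zs I) ->
  exists ys, (forall y, y \in ys -> ~ I y) /\
    forall K, (forall y, y \in ys -> ~ K y) -> forall W, List.In W l -> ~ W K.
Proof.
move=> HI; elim: l => [|W l IH] l_basic; first by exists [::]; split => // K _ W [].
have [ys [ysI ysK]] := IH (fun V lV => l_basic V (or_intror lV)).
have [zs [Wzs zsI]] := l_basic W (or_introl erefl).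
have [z zzs Iz] : exists2 z, z \in zs & ~ I z.
  apply: contrapT => noz; apply: zsI; split => // z zzs.
  by apply: contrapT => Iz; apply: noz; exists z.
exists (z :: ys); split=> [y|K Kys V [<-|lV]].
- by rewrite in_cons => /orP [/eqP -> | /ysI].
- by move=> /Wzs [_ Kzs]; apply: (Kys z (mem_head _ _)); apply: Kzs.
- by apply: ysK lV => y yys; apply: Kys; rewrite in_cons yys orbT.
Qed.

(* A quasi-compact Zariski open set not containing I is a finite union of basic
   sets B(zs), each of which is avoided by choosing one generator outside I. *)
Lemma zquasi_compact_avoid U I : zopen U -> zquasi_compact U -> is_ideal I -> ~ U I ->
  exists ys, (forall y, y \in ys -> ~ I y) /\
    forall K, (forall y, y \in ys -> ~ K y) -> ~ U K.
Proof.
move=> [_ Uopen] [_ Ucompact] HI UI.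
pose C := [set W | exists zs, W = zbasic zs /\ zbasic zs `<=` U].
have C_open V : C V -> zopen V by move=> [zs [-> _]]; apply: zbasic_open.
have U_cover : U `<=` \bigcup_(V in C) V.
  move=> K UK; have [zs [Kzs zsU]] := Uopen _ UK.
  by exists (zbasic zs) => //; exists zs.
have [l [lC l_cover]] := Ucompact C C_open U_cover.
have l_basic W : List.In W l -> exists zs, W `<=` zbasic zs /\ ~ zbasic zs I.
  by move=> /lC [zs [-> zsU]]; exists zs; split => // /zsU.
have [ys [ysI ysK]] := zbasics_avoid HI l_basic.
by exists ys; split => // K Kys /l_cover [W lW]; apply: ysK.
Qed.

Lemma cons_subbasics_avoid I (s : seq (set (set R))) : is_ideal I ->
  (forall V, List.In V s -> cons_subbasic V) -> (forall V, List.In V s -> V I) ->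
  exists xs, (forall x, x \in xs -> ~ I x) /\
    forall K, is_ideal K -> I `<=` K -> (forall x, x \in xs -> ~ K x) ->
      forall V, List.In V s -> V K.
Proof.
move=> HI; elim: s => [|V s IH] s_sub sI; first by exists [::]; split => // K _ _ _ V [].
have [xs [xsI xsK]] :=
  IH (fun W sW => s_sub W (or_intror sW)) (fun W sW => sI W (or_intror sW)).
have VI := sI V (or_introl erefl).
have [U [Uopen Ucompact [EV|EV]]] := s_sub V (or_introl erefl).
  exists xs; split => // K HK IK Kxs W [<-|sW]; last exact: xsK.
  by rewrite EV in VI *; apply: zopen_up VI HK IK.
have UI : ~ U I by rewrite EV in VI; case: VI.
have [ys [ysI ysK]] := zquasi_compact_avoid Uopen Ucompact HI UI.
exists (ys ++ xs); split=> [x|K HK IK Kx W [<-|sW]].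
- by rewrite mem_cat => /orP []; [apply: ysI | apply: xsI].
- by rewrite EV; split; last by apply: ysK => y yys; apply: Kx; rewrite mem_cat yys.
- by apply: xsK => // x xxs; apply: Kx; rewrite mem_cat xxs orbT.
Qed.

Section Noetherian.
Hypothesis HR : noetherian R.

Lemma noetherian_maximal (F : set (set R)) L0 :
  (forall L, F L -> is_ideal L) -> F L0 ->
  exists M, F M /\ forall L, F L -> M `<=` L -> L = M.
Proof.
move=> F_ideal FL0; apply: contrapT => no_max.
have step M : exists L, F M -> [/\ F L, M `<=` L & L <> M].
  have [FM|] := EM (F M); last by exists M.
  have /existsNP [L] : ~ forall L, F L -> M `<=` L -> L = M.
    by move=> M_max; apply: no_max; exists M.
  by move=> /not_implyP [FL /not_implyP [ML LM]]; exists L.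
have [g gP] := choice step.
pose f n := iter n g L0.
have Ff n : F (f n) by elim: n => //= n IH; have [] := gP _ IH.
have [N fN] :=
  @HR f (fun n => F_ideal _ (Ff n)) (fun n => let: And3 _ h _ := gP _ (Ff n) in h).
by have [_ _] := gP _ (Ff N); apply; exact: (fN N.+1 (leqnSn N)).
Qed.

Lemma maximal_above L : is_ideal L -> ~ L 1 -> exists M, is_maximal M /\ L `<=` M.
Proof.
move=> HL L1.
pose F := [set M | [/\ is_ideal M, L `<=` M & ~ M 1]].
have [M [[HM LM M1] Mmax]] :=
  @noetherian_maximal F L (fun M '(And3 h _ _) => h) (And3 HL (@subset_refl _ L) L1).
exists M; split=> //; split=> // K HK MK K1.
by apply: Mmax => //; split => //; apply: subset_trans MK.
Qed.

Lemma noetherian_finitely_generated I : is_ideal I ->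
  exists ys, (forall y, y \in ys -> I y) /\ I `<=` span ys.
Proof.
move=> HI.
pose F := [set L | exists ys, (forall y, y \in ys -> I y) /\ L = span ys].
have F_ideal L : F L -> is_ideal L by move=> [ys [_ ->]]; apply: span_ideal.
have F0 : F (span [::]) by exists [::].
have [_ [[ys [Iys ->]] ys_max]] := noetherian_maximal F_ideal F0.
exists ys; split => // a Ia; apply: contrapT => ys_a.
have Fa : F (span (a :: ys)).
  by exists (a :: ys); split => // y; rewrite in_cons => /orP [/eqP ->|/Iys].
have ys_sub : span ys `<=` span (a :: ys).
  apply: span_sub; first exact: span_ideal.
  by move=> y yys; apply: mem_span; rewrite in_cons yys orbT.
by apply: ys_a; rewrite -(ys_max _ Fa ys_sub); apply: mem_span; rewrite mem_head.
Qed.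

Lemma colon_expn_stable J s : is_ideal J ->
  exists N, forall n, (N <= n)%N -> colon J (s ^+ n) = colon J (s ^+ N).
Proof.
move=> HJ; apply: (@HR (fun n => colon J (s ^+ n))) => [n|n r]; first exact: colon_ideal.
by rewrite /colon /= exprSr mulrA; apply: idealMr.
Qed.

(* A chain P < M with M maximal above L > P contradicts dim R/I = 0. *)
Lemma dim_quot_eq0_prime_maximal I P :
  dim_quot_eq0 I -> is_prime P -> I `<=` P -> is_maximal P.
Proof.
move=> [_ dim0] HP IP; have [HPi P1 _] := HP.
split => // L HL PL L1; apply: contrapT => LP.
have [M [Mmax LM]] := maximal_above HL L1.
suff /dim0 : prime_chain_above I 1 (fun i => if i == 0%N then P else M) by [].
split=> [[|[|i]] //= _|//|[|i] //= _].
- exact: maximal_prime.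
- split; first exact: subset_trans PL LM.
  by move=> PM; apply: LP; apply/seteqP; split => //; rewrite PM.
Qed.

Section ZeroDimensionalCriterion.
Variables (J : set R) (xs : seq R).
Hypotheses (HJ : is_ideal J) (xs_notin : forall x, x \in xs -> ~ J x).
Hypothesis xs_cover : forall a, ~ J a -> exists2 x, x \in xs & adjoin J a x.

(* [below x y] means J + Rx <= J + Ry. *)
Let below x y := adjoin J y x.

Let minimal x := x \in xs /\ forall y, y \in xs -> below y x -> below x y.

Lemma exists_minimal a : ~ J a -> exists x, minimal x /\ below x a.
Proof.
move=> Ja; have [x0 x0xs x0a] := xs_cover Ja.
have [m [mxs mx0 m_min]] := @exists_minimal_below _ below xs
  (fun x => adjoin_self x HJ) (fun x y z => adjoin_trans HJ) _ x0xs.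
by exists m; split => //; apply: adjoin_trans mx0 x0a.
Qed.

Lemma colon_minimal_maximal x : minimal x -> is_maximal (colon J x).
Proof.
move=> [xxs x_min]; split; first exact: colon_ideal.
  by rewrite /colon /= mul1r; apply: xs_notin.
move=> L HL colonL L1; apply/seteqP; split => // a La; apply: contrapT => Jax.
have [y yxs y_ax] := xs_cover Jax.
have ax_x : below (a * x) x by exists 0, a; rewrite add0r; split => //; apply: ideal0.
have [k [u [Jk Ex]]] := adjoin_trans HJ (x_min y yxs (adjoin_trans HJ y_ax ax_x)) y_ax.
(* x = k + u a x, so 1 - u a lies in (J : x), and u a in L. *)
apply: L1; rewrite -(subrK (u * a) 1); apply: idealD => //; last exact: idealMl.
by apply: colonL; rewrite /colon /= mulrBl mul1r -mulrA {1}Ex addrK.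
Qed.

(* Stabilising (J : s^n) at n = N, the element t = s^(N+1) would lie below a
   minimal x = j + r t with t x in J, forcing r t in J and thus x in J. *)
Lemma minimal_not_killed s :
  (forall n, ~ J (s ^+ n)) -> ~ (forall x, minimal x -> J (s * x)).
Proof.
move=> s_nil s_kills.
have [N stable] := colon_expn_stable s HJ.
pose t := s ^+ N.+1.
have [m [mmin [j [r [Jj Em]]]]] := exists_minimal (s_nil N.+1).
have Jtm : J (t * m).
  by rewrite /t exprSr -mulrA; apply: idealMl => //; apply: s_kills mmin.
have : colon J (s ^+ (N.+1 + N.+1)) r.
  rewrite /colon /= exprD -/t.
  have -> : r * (t * t) = t * m - t * j by rewrite Em mulrDr addrC addKr mulrCA.
  by apply: idealB => //; apply: idealMl.
rewrite stable; last exact: ltnW (leq_addr _ _).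
rewrite -(stable N.+1) // => Jrt.
by apply: (xs_notin mmin.1); rewrite Em; apply: idealD.
Qed.

Lemma prime_sup_colon_minimal P : is_prime P -> J `<=` P ->
  exists x, minimal x /\ colon J x `<=` P.
Proof.
move=> HP JP; pose l := [seq x <- xs | `[< minimal x >]].
have l_min x : x \in l -> minimal x by rewrite mem_filter => /andP [/asboolP].
have colon_l x : x \in l -> is_ideal (colon J x) by move=> _; apply: colon_ideal.
have capP : [set r | forall x, x \in l -> colon J x r] `<=` P.
  move=> s s_kills; apply: contrapT => Ps.
  apply: (@minimal_not_killed s) => [n /JP|x xmin]; first exact: prime_expn.
  by apply: s_kills; rewrite mem_filter xmin.1 andbT; apply/asboolP.
have [x /l_min xmin xP] := prime_sup_bigcap HP colon_l capP.
by exists x.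
Qed.

Lemma dim_quot_eq0_of_cover : ~ J 1 -> dim_quot_eq0 J.
Proof.
move=> J1; apply: dim_quot_eq0_of_maximal_primes.
  have [x [xmin _]] := exists_minimal J1.
  exists (colon J x); split; last exact: sub_colon.
  by apply: maximal_prime; apply: colon_minimal_maximal.
move=> P HP JP; have [HPi P1 _] := HP.
have [x [xmin xP]] := prime_sup_colon_minimal HP JP.
have xmax := colon_minimal_maximal xmin.
by rewrite (maximal_sub_eq xmax HPi P1 xP).
Qed.

End ZeroDimensionalCriterion.

Lemma P0_cons_dense : cons_dense_in (proper_ideals R) (P0 R).
Proof.
split=> [I [] //|O [_ Oopen] [I [OI [HI I1]]]].
have [s [s_sub sI sO]] := Oopen I OI.
have [xs [xsI xsK]] := cons_subbasics_avoid HI s_sub sI.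
pose F := [set L | [/\ is_ideal L, I `<=` L & forall x, x \in 1 :: xs -> ~ L x]].
have FI : F I by split => // x; rewrite in_cons => /orP [/eqP -> | /xsI].
have [J [[HJ IJ Jxs] J_max]] :=
  @noetherian_maximal F I (fun L '(And3 h _ _) => h) FI.
have J1 : ~ J 1 by apply: Jxs; rewrite mem_head.
have Jxs' x : x \in xs -> ~ J x by move=> xxs; apply: Jxs; rewrite in_cons xxs orbT.
exists J; split; first by apply: sO; split => // V; apply: xsK.
split; first by split.
apply: (dim_quot_eq0_of_cover HJ Jxs) => // a Ja; apply: contrapT => no_x.
have FJa : F (adjoin J a).
  split=> [|z /IJ /(sub_adjoin a HJ) //|x xs' Jax]; first exact: adjoin_ideal.
  by apply: no_x; exists x.
by apply: Ja; rewrite -(J_max _ FJa (sub_adjoin a HJ)); apply: adjoin_self.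
Qed.

Lemma finite_quotient_of_dim0 I : residue_fields_finite R ->
  is_ideal I -> dim_quot_eq0 I -> finite_quotient I.
Proof.
move=> Rfin HI dim0; apply: contrapT => Iinf.
pose F := [set J | [/\ is_ideal J, I `<=` J & ~ finite_quotient J]].
have [J [[HJ IJ Jinf] J_max]] :=
  @noetherian_maximal F I (fun L '(And3 h _ _) => h) (And3 HI (@subset_refl _ I) Iinf).
have fin_adjoin a : ~ J a -> finite_quotient (adjoin J a).
  move=> Ja; apply: contrapT => Jainf; apply: Ja.
  have FJa : F (adjoin J a).
    by split; [apply: adjoin_ideal | apply: subset_trans IJ (sub_adjoin a HJ) |].
  by rewrite -(J_max _ FJa (sub_adjoin a HJ)); apply: adjoin_self.
have J1 : ~ J 1.
  move=> J1; apply: Jinf; exists [:: 0] => x; exists 0; rewrite ?mem_head // subr0.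
  by rewrite -(mulr1 x); apply: idealMl.
have [Jp|Jnp] := EM (is_prime J).
  exact: Jinf (Rfin _ (dim_quot_eq0_prime_maximal dim0 Jp IJ)).
have [a [b [Jab Ja Jb]]] := not_prime_zero_divisors HJ J1 Jnp.
have adjoin_colon : adjoin J b `<=` colon J a.
  move=> _ [j [r [Jj ->]]]; rewrite /colon /= mulrDl -mulrA [b * a]mulrC.
  by apply: (idealD HJ); [apply: idealMr | apply: idealMl].
apply: Jinf; apply: (finite_quotient_colon_adjoin HJ (fin_adjoin a Ja)).
exact: finite_quotient_sub adjoin_colon (fin_adjoin b Jb).
Qed.

(* With I = span gens and reps representing R/I, {I} is cut out of B(gens) by the
   complements of the B(r :: gens), r in reps outside I. *)
Lemma cons_open_finite_quotient I : is_ideal I -> finite_quotient I -> cons_open [set I].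
Proof.
move=> HI [reps reps_cover].
have [gens [Igens I_span]] := noetherian_finitely_generated HI.
pose W r := if `[< I r >] then zbasic gens else ideals R `\` zbasic (r :: gens).
pose s := zbasic gens :: map W reps.
have gens_sub : cons_subbasic (zbasic gens).
  by exists (zbasic gens); split; [apply: zbasic_open | apply: zbasic_quasi_compact | left].
have sP V : List.In V s -> cons_subbasic V /\ V I.
  move=> [<-|/List.in_map_iff [r [<- _]]]; first by [].
  rewrite /W; case: asboolP => Ir; first by [].
  split; first by exists (zbasic (r :: gens)); split;
    [apply: zbasic_open | apply: zbasic_quasi_compact | right].
  by split => // -[_ Ir']; apply: Ir; apply: Ir'; rewrite mem_head.
split=> [_ -> //|_ ->]; exists s; split=> [V /sP [] //|V /sP [] //|K [HK sK]].
have [_ Kgens] := sK _ (or_introl erefl).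
have IK : I `<=` K := subset_trans I_span (span_sub HK Kgens).
apply/seteqP; split => // a Ka; apply: contrapT => Ia.
have [r rreps Iar] := reps_cover a.
have Ir : ~ I r by move=> Ir; apply: Ia; rewrite -(subrK r a); apply: idealD.
have /sK : List.In (W r) s by right; apply: List.in_map; apply: In_mem.
rewrite /W asboolF // => -[_]; apply; split => // z.
rewrite in_cons => /orP [/eqP -> | /Kgens //].
by have := idealB HK Ka (IK _ Iar); rewrite opprB addrC subrK.
Qed.

Lemma P0_sub_cons_dense D : residue_fields_finite R ->
  cons_dense_in (proper_ideals R) D -> P0 R `<=` D.
Proof.
move=> Rfin [_ D_dense] I [[HI I1] dim0].
have Iopen := cons_open_finite_quotient HI (finite_quotient_of_dim0 Rfin HI dim0).
have [K [KI DK]] : [set I] `&` D !=set0 by apply: D_dense Iopen _; exists I.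
by rewrite -KI.
Qed.

End Noetherian.

End Ideals.

Theorem proposition5p5 (R : comPzRingType) (HR : noetherian R) :
  cons_dense_in (proper_ideals R) (P0 R) /\
  (residue_fields_finite R ->
     cons_dense_in (proper_ideals R) (P0 R) /\
     forall D : set (set R),
       cons_dense_in (proper_ideals R) D -> P0 R `<=` D).
Proof.
have dense := P0_cons_dense HR.
by split => // Rfin; split => // D; apply: P0_sub_cons_dense.
Qed.
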